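(* Let $q$ be a prime, $0\le r\le n$, $X_r=\mathrm{diag}(qI_r,I_{n-r})$ and $X_{0,r}=\mathrm{diag}(I_{n-r},q^{-1}I_r)$. Suppose $(M\ N)$ and $(X_{0,r}MX_r^{-1}\ \ X_{0,r}NX_r)$ are both integral coprime symmetric pairs, with $\det N\ne0$. Then $$\mathcal G_{X_{0,r}MX_r^{-1}}(X_{0,r}NX_r)=\mathcal G_M(N).$$
   Context: A pair $(M\ N)$ of integral $n\times n$ matrices is a coprime symmetric pair if $M\,{}^tN$ is symmetric and $(M\ N)$ has rank $n$ modulo every prime. For such a pair with $\det N\ne0$, $\mathcal G_M(N)=\sum_{U\in\mathbb Z^{1,n}/\mathbb Z^{1,n}N}\exp\big(2\pi i\,\mathrm{Tr}({}^tUUN^{-1}M)\big)$. *)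

From mathcomp Require Import all_boot all_order all_algebra.
From mathcomp Require Import Rstruct.
From mathcomp.real_closed Require Import complex.
From Stdlib Require Reals.

Set Implicit Arguments.
Unset Strict Implicit.
Unset Printing Implicit Defensive.

Import GRing.Theory Num.Theory.
Local Open Scope ring_scope.

Definition CC := (Rdefinitions.R)[i].

(* e(x) = exp(2 pi i x) for rational x. *)
Definition e (x : rat) : CC :=
  Complex (Rtrigo_def.cos (2 * Rtrigo1.PI * ratr x)%R)
          (Rtrigo_def.sin (2 * Rtrigo1.PI * ratr x)%R).

Definition mxQ m n (A : 'M[int]_(m, n)) : 'M[rat]_(m, n) := map_mx intr A.

Definition coprime_symmetric_pair n (M N : 'M[int]_n) : Prop :=
  (M *m N^T)^T = M *m N^T /\
  forall p : nat, prime p ->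
    \rank (map_mx (fun z : int => z%:~R : 'F_p) (row_mx M N)) = n.

(* U ~ V in Z^{1,n} / Z^{1,n} N  (for det N <> 0): (U - V) N^{-1} is integral,
   i.e. U - V = W N for some integral row vector W. *)
Definition rowN_equiv n (N : 'M[int]_n) (U V : 'rV[int]_n) : bool :=
  [forall j, (mxQ (U - V) *m invmx (mxQ N)) 0 j \is a Num.int].

(* The box {0,...,d-1}^n with d = |det N|; since d Z^n is contained in Z^n N,
   every class of Z^{1,n}/Z^{1,n}N meets the box, and the classes of the
   quotient correspond bijectively to the traces of those classes on the box. *)
Definition boxd n (N : 'M[int]_n) : nat := `|\det N|%N.

Definition box_embed n d (b : 'rV['I_d]_n) : 'rV[int]_n :=
  map_mx (fun i : 'I_d => (i : nat)%:Z) b.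

Definition quotient_classes n (N : 'M[int]_n) : {set {set 'rV['I_(boxd N)]_n}} :=
  [set [set b' | rowN_equiv N (box_embed b) (box_embed b')] | b : 'rV['I_(boxd N)]_n].

Definition gauss_term n (M N : 'M[int]_n) (U : 'rV[int]_n) : CC :=
  e (\tr ((mxQ U)^T *m mxQ U *m invmx (mxQ N) *m mxQ M)).

(* G_M(N) = sum over U in Z^{1,n}/Z^{1,n}N of e(Tr(tU U N^{-1} M)),
   summing over the classes, each evaluated at a representative. *)
Definition gauss_sum n (M N : 'M[int]_n) : CC :=
  \sum_(C in quotient_classes N)
     match [pick b in C] with
     | Some b => gauss_term M N (box_embed b)
     | None => 0
     end.

Definition Xr n (q r : nat) : 'M[rat]_n :=
  \matrix_(i, j) (if i == j then (if (i < r)%N then q%:R else 1) else 0).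

Definition X0r n (q r : nat) : 'M[rat]_n :=
  \matrix_(i, j) (if i == j then (if (n - r <= i)%N then q%:R^-1 else 1) else 0).

From mathcomp Require Import all_boot all_order all_algebra.
From mathcomp Require Import Rstruct.
From mathcomp.real_closed Require Import complex.

Set Implicit Arguments.
Unset Strict Implicit.
Unset Printing Implicit Defensive.

Import GRing.Theory Num.Theory.
Local Open Scope ring_scope.

(* Right multiplication by X_r induces a bijection from Z^{1,n}/Z^{1,n}N onto
   Z^{1,n}/Z^{1,n}N', where N' = X_{0,r} N X_r, mapping the summand of G_M(N)
   at U to the summand of G_{M'}(N') at U X_r: since
   N'^-1 M' = X_r^-1 N^-1 M X_r^-1 and X_r is symmetric, the two traces agree.
   The map is well defined because N X_r = X_{0,r}^-1 N' with X_{0,r}^-1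
   integral.  For injectivity and surjectivity multiply by q X_{0,r}, which
   kills M and sends N to N' (q X_r^-1) modulo q.  As (M N) has full rank
   modulo q, a row W with W (q X_{0,r}) (M N) = 0 mod q is itself 0 mod q, and
   a rank count shows that modulo q the rows of N' (q X_r^-1) span the first r
   coordinates. *)

Lemma cos_sin_add_2PI_nat (y : Rdefinitions.R) (k : nat) :
  Rtrigo_def.cos (y + 2 * Rtrigo1.PI * k%:R) = Rtrigo_def.cos y /\
  Rtrigo_def.sin (y + 2 * Rtrigo1.PI * k%:R) = Rtrigo_def.sin y.
Proof.
have := Rtrigo1.cos_period y k; have := Rtrigo1.sin_period y k.
rewrite INRE RplusE !RmultE IZRposE /= -mulrA (mulrC _ Rtrigo1.PI) mulrA.
by split.
Qed.

Lemma e_addz (x : rat) (z : int) : e (x + z%:~R) = e x.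
Proof.
rewrite /e rmorphD /= ratr_int mulrDr.
set y := 2 * Rtrigo1.PI * ratr x.
case: z => k; first by have [-> ->] := cos_sin_add_2PI_nat y k.
have [<- <-] := cos_sin_add_2PI_nat (y + 2 * Rtrigo1.PI * (Negz k)%:~R) k.+1.
by rewrite NegzE mulrNz mulrN addrNK.
Qed.

Lemma mxQM m n p (A : 'M[int]_(m, n)) (B : 'M[int]_(n, p)) :
  mxQ (A *m B) = mxQ A *m mxQ B.
Proof. exact: map_mxM. Qed.

Lemma mxQD m n (A B : 'M[int]_(m, n)) : mxQ (A + B) = mxQ A + mxQ B.
Proof. exact: map_mxD. Qed.

Lemma mxQT m n (A : 'M[int]_(m, n)) : mxQ A^T = (mxQ A)^T.
Proof. by rewrite /mxQ map_trmx. Qed.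

Lemma mxQZ m n (a : int) (A : 'M[int]_(m, n)) : mxQ (a *: A) = a%:~R *: mxQ A.
Proof. exact: map_mxZ. Qed.

Lemma mxQ_scalar n (a : int) : mxQ (a%:M : 'M_n) = a%:~R%:M.
Proof. exact: map_scalar_mx. Qed.

Lemma mxQ_tr n (A : 'M[int]_n) : \tr (mxQ A) = (\tr A)%:~R.
Proof. exact: trace_map_mx. Qed.

Lemma mxQ_inj m n : injective (@mxQ m n).
Proof.
move=> A B /matrixP eqAB; apply/matrixP=> i j.
by have := eqAB i j; rewrite !mxE; apply: intr_inj.
Qed.

Lemma mxQ_unit n (N : 'M[int]_n) : (mxQ N \in unitmx) = (\det N != 0).
Proof. by rewrite unitmxE /mxQ det_map_mx unitfE intr_eq0. Qed.

Definition row_congr n (N : 'M[int]_n) (U V : 'rV[int]_n) : Prop :=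
  exists W : 'rV[int]_n, U - V = W *m N.

Section QuotientClasses.
Variables (n : nat) (N : 'M[int]_n).

Lemma row_congr_sym U V : row_congr N U V -> row_congr N V U.
Proof. by case=> W eqUV; exists (- W); rewrite mulNmx -eqUV opprB. Qed.

Lemma row_congr_trans U V Y :
  row_congr N U V -> row_congr N V Y -> row_congr N U Y.
Proof.
case=> W1 eq1 [W2 eq2]; exists (W1 + W2).
by rewrite mulmxDl -eq1 -eq2 addrA subrK.
Qed.

Hypothesis detN : \det N != 0.

Lemma rowN_equivP U V : reflect (row_congr N U V) (rowN_equiv N U V).
Proof.
have unitN : mxQ N \in unitmx by rewrite mxQ_unit.
apply: (iffP forallP) => [intUV | [W eqUV] j].
  exists (\row_j Num.floor ((mxQ (U - V) *m invmx (mxQ N)) ord0 j)).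
  apply: mxQ_inj; rewrite mxQM -[LHS](mulmxKV unitN); congr (_ *m _).
  by apply/matrixP => i j; rewrite ord1 [RHS]mxE [in RHS]mxE floorK ?intUV.
by rewrite eqUV mxQM mulmxK // mxE intr_int.
Qed.

Local Notation d := (boxd N).
Local Notation box := 'rV['I_d]_n.

Lemma boxd_gt0 : (0 < d)%N.
Proof. by rewrite absz_gt0. Qed.

Definition box_rep (U : 'rV[int]_n) : box :=
  \row_j Ordinal (ltn_pmod `|(U ord0 j %% d%:Z)%Z| boxd_gt0).

Lemma box_embed_rep U : box_embed (box_rep U) = \row_j (U ord0 j %% d%:Z)%Z.
Proof.
apply/rowP => j; have d_gt0 : 0 < d%:Z by rewrite ltz_nat boxd_gt0.
have mod_ge0 := modz_ge0 (U ord0 j) (lt0r_neq0 d_gt0).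
rewrite !mxE /= modn_small ?(gez0_abs mod_ge0) //.
by rewrite -ltz_nat (gez0_abs mod_ge0) ltz_pmod.
Qed.

(* [(sgz (det N) *: adj N) *m N = d%:M], so [d Z^n] lies in [Z^n N]. *)
Lemma box_rep_congr U : row_congr N U (box_embed (box_rep U)).
Proof.
exists ((\row_j (U ord0 j %/ d%:Z)%Z) *m (sgz (\det N) *: \adj N)).
rewrite -mulmxA -scalemxAl mul_adj_mx scale_scalar_mx -abszEsg mul_mx_scalar.
apply/rowP => j; rewrite box_embed_rep !mxE.
by rewrite {1}(divz_eq (U ord0 j) d%:Z) addrK mulrC.
Qed.

Definition class_of (U : 'rV[int]_n) : {set box} :=
  [set b | rowN_equiv N U (box_embed b)].

Lemma class_ofP U b : reflect (row_congr N U (box_embed b)) (b \in class_of U).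
Proof. by rewrite inE; apply: rowN_equivP. Qed.

Lemma class_of_eq U V : class_of U = class_of V <-> row_congr N U V.
Proof.
split=> [eqUV | congrUV].
  have /class_ofP := box_rep_congr V; rewrite -eqUV => /class_ofP congrU.
  exact: row_congr_trans congrU (row_congr_sym (box_rep_congr V)).
apply/setP => b; apply/class_ofP/class_ofP => [congrV | congrU].
  exact: row_congr_trans (row_congr_sym congrUV) congrV.
exact: row_congr_trans congrUV congrU.
Qed.

Lemma class_of_in U : class_of U \in quotient_classes N.
Proof.
apply/imsetP; exists (box_rep U) => //.
exact/class_of_eq/box_rep_congr.
Qed.

Lemma quotient_classesP C :
  C \in quotient_classes N -> exists U, C = class_of U.
Proof. by case/imsetP=> b _ ->; exists (box_embed b). Qed.

Lemma pick_class_of U :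
  exists2 b, [pick b in class_of U] = Some b & row_congr N U (box_embed b).
Proof.
case: pickP => [b /class_ofP | noU]; first by exists b.
by have /class_ofP := box_rep_congr U; rewrite noU.
Qed.

Definition class_value (f : 'rV[int]_n -> CC) (C : {set box}) : CC :=
  if [pick b in C] is Some b then f (box_embed b) else 0.

Definition class_rep (C : {set box}) : 'rV[int]_n :=
  if [pick b in C] is Some b then box_embed b else 0.

Definition congr_invariant (f : 'rV[int]_n -> CC) : Prop :=
  forall U V, row_congr N U V -> f U = f V.

Lemma class_value_of f U :
  congr_invariant f -> class_value f (class_of U) = f U.
Proof.
rewrite /class_value => f_inv; have [b -> congrU] := pick_class_of U.
by rewrite (f_inv _ _ congrU).
Qed.

Lemma class_rep_congr U : row_congr N (class_rep (class_of U)) U.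
Proof.
by rewrite /class_rep; have [b -> /row_congr_sym] := pick_class_of U.
Qed.

End QuotientClasses.

Lemma gauss_sumE n (M N : 'M[int]_n) :
  gauss_sum M N = \sum_(C in quotient_classes N) class_value (gauss_term M N) C.
Proof. by []. Qed.

Lemma class_sum_transfer n (N N' : 'M[int]_n) (f g : 'rV[int]_n -> CC)
    (phi : 'rV[int]_n -> 'rV[int]_n) :
  \det N != 0 -> \det N' != 0 ->
  congr_invariant N f -> congr_invariant N' g -> (forall U, g (phi U) = f U) ->
  (forall U V, row_congr N' (phi U) (phi V) <-> row_congr N U V) ->
  (forall V, exists U, row_congr N' (phi U) V) ->
  \sum_(C in quotient_classes N') class_value g C =
  \sum_(C in quotient_classes N) class_value f C.
Proof.
move=> detN detN' f_inv g_inv gphi phi_congr phi_surj.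
pose h (C : {set 'rV['I_(boxd N)]_n}) := class_of N' (phi (class_rep C)).
have hE U : h (class_of N U) = class_of N' (phi U).
  by apply/(class_of_eq detN')/phi_congr/(class_rep_congr detN).
have h_inj : {in quotient_classes N &, injective h}.
  move=> _ _ /quotient_classesP[U ->] /quotient_classesP[V ->].
  by rewrite !hE => /(class_of_eq detN')/phi_congr/(class_of_eq detN).
have h_onto : h @: quotient_classes N = quotient_classes N'.
  apply/setP => C'; apply/imsetP/idP => [[_ /quotient_classesP[U ->] ->] |].
    by rewrite hE class_of_in.
  case/quotient_classesP => V ->; have [U congrV] := phi_surj V.
  exists (class_of N U); first exact: class_of_in.
  by rewrite hE; apply/(class_of_eq detN')/row_congr_sym.
rewrite -h_onto big_imset //=; apply: eq_bigr => _ /quotient_classesP[U ->].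
by rewrite hE !class_value_of.
Qed.

(* Expanding [U = V + W N], the cross term [N^T W^T V] contributes an
   integral trace only because [M N^T] is symmetric. *)
Lemma gauss_term_congr n (M N : 'M[int]_n) :
  \det N != 0 -> (M *m N^T)^T = M *m N^T -> congr_invariant N (gauss_term M N).
Proof.
move=> detN symMN U V [W eqUV].
have unitN : mxQ N \in unitmx by rewrite mxQ_unit.
have symQ : mxQ N *m (mxQ M)^T = mxQ M *m (mxQ N)^T.
  by rewrite trmx_mul trmxK in symMN; rewrite -!mxQT -!mxQM symMN.
have defU : mxQ U = mxQ V + mxQ W *m mxQ N.
  by rewrite -mxQM -mxQD -eqUV addrC subrK.
have defUT : (mxQ U)^T = (mxQ V)^T + (mxQ N)^T *m (mxQ W)^T.
  by rewrite defU linearD /= trmx_mul.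
rewrite /gauss_term; set Ni := invmx (mxQ N).
pose T := V^T *m W *m M + W^T *m V *m M^T + N^T *m W^T *m W *m M.
suff -> : \tr ((mxQ U)^T *m mxQ U *m Ni *m mxQ M) =
    \tr ((mxQ V)^T *m mxQ V *m Ni *m mxQ M) + (\tr T)%:~R by rewrite e_addz.
rewrite -mxQ_tr /T !mxQD !mxQM !mxQT defUT defU.
rewrite !mulmxDl !mulmxDr !mulmxDl !mxtraceD !addrA.
have cancelN X Y : X *m (Y *m mxQ N) *m Ni *m mxQ M = X *m Y *m mxQ M.
  by rewrite mulmxA mulmxK.
have cross : \tr ((mxQ N)^T *m (mxQ W)^T *m mxQ V *m Ni *m mxQ M) =
    \tr ((mxQ W)^T *m mxQ V *m (mxQ M)^T).
  by rewrite -!mulmxA mxtrace_mulC -!mulmxA -symQ /Ni mulKmx.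
by rewrite !cancelN cross.
Qed.

Lemma row_congr_mulmx n (N N' A B : 'M[int]_n) (U V : 'rV[int]_n) :
  N *m A = B *m N' -> row_congr N U V -> row_congr N' (U *m A) (V *m A).
Proof.
move=> NA [W eqUV]; exists (W *m B).
by rewrite -mulmxBl eqUV -!mulmxA NA.
Qed.

(* [\rank (N' P) = \rank (Q (M N)) = \rank Q = r] and [N' P] lies in the row
   space of [P = pid_mx r]. *)
Lemma pid_mx_sub_mulmx (F : fieldType) n r (M N N' Q : 'M[F]_n) :
  row_free (row_mx M N) -> Q *m M = 0 -> N' *m pid_mx r = Q *m N ->
  \rank Q = r -> ((pid_mx r : 'M_n) <= N' *m pid_mx r)%MS.
Proof.
move=> freeMN QM0 defN'P rankQ.
have le_rn : (r <= n)%N by rewrite -rankQ rank_leq_row.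
have rankK : \rank (N' *m (pid_mx r : 'M_n)) = r.
  by rewrite defN'P -(rank_row_0mx n) -QM0 -mul_mx_row mxrankMfree.
by rewrite -(mxrank_leqif_sup (submxMl _ _)).2 rankK rank_pid_mx.
Qed.

Section ModPrime.
Variable q : nat.
Hypothesis q_prime : prime q.

Definition modq m n (A : 'M[int]_(m, n)) : 'M['F_q]_(m, n) :=
  map_mx (fun z : int => z%:~R) A.

Lemma modqM m n p (A : 'M[int]_(m, n)) (B : 'M[int]_(n, p)) :
  modq (A *m B) = modq A *m modq B.
Proof. exact: map_mxM. Qed.

Lemma modqB m n (A B : 'M[int]_(m, n)) : modq (A - B) = modq A - modq B.
Proof. exact: map_mxB. Qed.

Lemma modq_row_mx m n1 n2 (A : 'M[int]_(m, n1)) (B : 'M[int]_(m, n2)) :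
  modq (row_mx A B) = row_mx (modq A) (modq B).
Proof. exact: map_row_mx. Qed.

Lemma modq_qscale m n (A : 'M[int]_(m, n)) : modq (q%:Z *: A) = 0.
Proof.
apply/matrixP => i j; rewrite !mxE intrM.
by rewrite -pmulrn (pchar_Fp_0 q_prime) mul0r.
Qed.

Lemma modq_eq0 m n (A : 'M[int]_(m, n)) :
  modq A = 0 -> exists B, A = q%:Z *: B.
Proof.
move=> /matrixP A0; exists (\matrix_(i, j) (A i j %/ q%:Z)%Z).
apply/matrixP => i j; rewrite !mxE mulrC divzK //.
by rewrite (dvdz_pcharf (pchar_Fp q_prime)); have := A0 i j; rewrite !mxE => ->.
Qed.

Lemma modq_lift m n (X : 'M['F_q]_(m, n)) : exists A, modq A = X.
Proof.
exists (map_mx (fun x : 'F_q => (x : nat)%:Z) X).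
by apply/matrixP => i j; rewrite !mxE -pmulrn natr_Zp.
Qed.

Lemma row_free_modq n (M N : 'M[int]_n) :
  coprime_symmetric_pair M N -> row_free (modq (row_mx M N)).
Proof. by case=> _ rankMN; rewrite /row_free rankMN. Qed.

(* [(W B) (M N)] vanishes modulo [q] and [(M N)] has full rank modulo [q],
   so [W B = q Y]; then [q Y N = q (U - V)]. *)
Lemma row_congr_mulmx_reflect n (M N N' A A' B : 'M[int]_n) (U V : 'rV[int]_n) :
  row_free (modq (row_mx M N)) -> modq (B *m M) = 0 -> B *m N = N' *m A' ->
  A *m A' = q%:Z%:M -> row_congr N' (U *m A) (V *m A) -> row_congr N U V.
Proof.
move=> freeMN BM0 BN AA' [W eqUV]; rewrite -mulmxBl in eqUV.
have WBN : W *m B *m N = q%:Z *: (U - V).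
  by rewrite -mulmxA BN mulmxA -eqUV -mulmxA AA' mul_mx_scalar.
have /modq_eq0[Y defWB] : modq (W *m B) = 0.
  apply/eqP; rewrite -(mulmx_free_eq0 _ freeMN) -modqM mul_mx_row.
  by rewrite WBN -mulmxA modq_row_mx modqM BM0 mulmx0 modq_qscale row_mx0.
exists Y; apply/matrixP => i j; move/matrixP: WBN => /(_ i j).
rewrite defWB -scalemxAl !mxE => /mulfI -> //.
by rewrite -lt0n prime_gt0.
Qed.

Lemma exists_modq_sub_mulmx_eq0 n r (M N N' A' B : 'M[int]_n) (V : 'rV[int]_n) :
  row_free (modq (row_mx M N)) -> modq (B *m M) = 0 -> B *m N = N' *m A' ->
  modq A' = pid_mx r -> \rank (modq B) = r ->
  exists W, modq ((V - W *m N') *m A') = 0.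
Proof.
move=> freeMN BM0 BN defA' rankB.
have /submxP[D defP] : ((pid_mx r : 'M_n) <= modq N' *m pid_mx r)%MS.
  apply: (pid_mx_sub_mulmx (M := modq M) (N := modq N) (Q := modq B)) => //.
  - by rewrite -modq_row_mx.
  - by rewrite -modqM.
  - by rewrite -defA' -!modqM BN.
have [W defW] := modq_lift (modq V *m D).
exists W; rewrite modqM modqB modqM defW defA' mulmxBl -!mulmxA -defP.
by rewrite subrr.
Qed.

End ModPrime.

Definition zdiag n (f : nat -> int) : 'M[int]_n := diag_mx (\row_(i < n) f i).

Lemma zdiag_swapM n (P : pred nat) (a b : int) :
  zdiag n (fun i => if P i then a else b) *m
  zdiag n (fun i => if P i then b else a) = (a * b)%:M.
Proof.
apply/matrixP => i j; rewrite mul_diag_mx !mxE !mulrnAr.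
by case: (P i); rewrite // mulrC.
Qed.

Definition Xr_int n q r := zdiag n (fun i => if (i < r)%N then q%:Z else 1).
Definition qXr_inv n q r := zdiag n (fun i => if (i < r)%N then 1 else q%:Z).
Definition qX0r n q r := zdiag n (fun i => if (n - r <= i)%N then 1 else q%:Z).
Definition X0r_inv n q r :=
  zdiag n (fun i => if (n - r <= i)%N then q%:Z else 1).

Lemma Xr_intE n q r : Xr n q r = mxQ (Xr_int n q r).
Proof.
apply/matrixP => i j; rewrite !mxE; case: eqP => [->|]; last by rewrite mulr0n.
by rewrite mulr1n; case: ifP.
Qed.

Lemma qX0rE n q r : (0 < q)%N -> X0r n q r = q%:R^-1 *: mxQ (qX0r n q r).
Proof.
move=> q_gt0; apply/matrixP => i j; rewrite !mxE.
case: eqP => [->|]; last by rewrite mulr0n mulr0.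
by rewrite mulr1n; case: ifP; rewrite ?mulr1 // -pmulrn mulVf ?pnatr_eq0 -?lt0n.
Qed.

Lemma modq_qXr_inv n q r : prime q -> modq q (qXr_inv n q r) = pid_mx r.
Proof.
move=> q_prime; apply/matrixP => i j; rewrite !mxE.
case: (eqVneq i j) => [<- | /negbTE neq_ij]; last by rewrite val_eqE neq_ij.
rewrite !eqxx /=; case: ifP => // _.
by rewrite -pmulrn (pchar_Fp_0 q_prime).
Qed.

Lemma modq_qX0r n q r : prime q -> modq q (qX0r n q r) = copid_mx (n - r).
Proof.
move=> q_prime; apply/matrixP => i j; rewrite !mxE.
case: (eqVneq i j) => [<- | /negbTE ij_F]; last by rewrite val_eqE ij_F subrr.
rewrite !eqxx /= ltnNge; case: ifP => _; first by rewrite subr0.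
by rewrite -pmulrn (pchar_Fp_0 q_prime) subrr.
Qed.

Lemma rank_modq_qX0r n q r :
  prime q -> (r <= n)%N -> \rank (modq q (qX0r n q r)) = r.
Proof.
by move=> q_prime le_rn; rewrite modq_qX0r // rank_copid_mx ?leq_subr ?subKn.
Qed.

Lemma mulmx_Xr_int_of_modq n q r (Y : 'rV[int]_n) : prime q ->
  modq q (Y *m qXr_inv n q r) = 0 -> exists U, Y = U *m Xr_int n q r.
Proof.
move=> q_prime /(modq_eq0 q_prime)[Z defZ].
exists (\row_j if (j < r)%N then Z ord0 j else Y ord0 j).
apply/rowP => j; move/rowP: defZ => /(_ j).
rewrite /Xr_int /qXr_inv /zdiag !mul_mx_diag !mxE.
by case: ifP => _; rewrite ?mulr1 // => ->; rewrite mulrC.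
Qed.

Lemma invmx_right (R : comUnitRingType) n (A B : 'M[R]_n) :
  A *m B = 1%:M -> invmx A = B.
Proof.
move=> AB; have [unitA _] := mulmx1_unit AB.
by rewrite -[invmx A]mulmx1 -AB mulmxA mulVmx ?mul1mx.
Qed.

Section ConjugatedPair.
Variables (n q r : nat) (M N M' N' : 'M[int]_n).
Hypothesis q_prime : prime q.

Local Notation X := (Xr_int n q r).

Let qE : ((q%:Z)%:~R : rat) = q%:R. Proof. by rewrite -pmulrn. Qed.
Let q_neq0 : (q%:R : rat) != 0.
Proof. by rewrite pnatr_eq0 -lt0n prime_gt0. Qed.

Lemma Xr_mul_inv : Xr n q r *m (q%:R^-1 *: mxQ (qXr_inv n q r)) = 1%:M.
Proof.
rewrite Xr_intE -scalemxAr -mxQM zdiag_swapM mulr1 mxQ_scalar qE.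
by rewrite scale_scalar_mx mulVf.
Qed.

Lemma X0r_mul_inv : X0r n q r *m mxQ (X0r_inv n q r) = 1%:M.
Proof.
rewrite qX0rE ?prime_gt0 // -scalemxAl -mxQM zdiag_swapM mul1r mxQ_scalar qE.
by rewrite scale_scalar_mx mulVf.
Qed.

Lemma Xr_unit : Xr n q r \in unitmx.
Proof. exact: (mulmx1_unit Xr_mul_inv).1. Qed.

Lemma X0r_unit : X0r n q r \in unitmx.
Proof. exact: (mulmx1_unit X0r_mul_inv).1. Qed.

Lemma mxQ_qXr_inv : mxQ (qXr_inv n q r) = q%:R *: invmx (Xr n q r).
Proof. by rewrite (invmx_right Xr_mul_inv) scalerA divff // scale1r. Qed.

Lemma mxQ_qX0r : mxQ (qX0r n q r) = q%:R *: X0r n q r.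
Proof. by rewrite qX0rE ?prime_gt0 // scalerA divff // scale1r. Qed.

Hypothesis defM' : mxQ M' = X0r n q r *m mxQ M *m invmx (Xr n q r).
Hypothesis defN' : mxQ N' = X0r n q r *m mxQ N *m Xr n q r.

Lemma N_mul_Xr : N *m X = X0r_inv n q r *m N'.
Proof.
apply: mxQ_inj; rewrite !mxQM -Xr_intE -(invmx_right X0r_mul_inv) defN'.
by rewrite !mulmxA mulVmx ?mul1mx // X0r_unit.
Qed.

Lemma qX0r_mul_N : qX0r n q r *m N = N' *m qXr_inv n q r.
Proof.
apply: mxQ_inj; rewrite !mxQM mxQ_qXr_inv mxQ_qX0r defN' -scalemxAr -scalemxAl.
by rewrite mulmxK // Xr_unit.
Qed.

Lemma modq_qX0r_mul_M : modq q (qX0r n q r *m M) = 0.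
Proof.
have -> : qX0r n q r *m M = q%:Z *: (M' *m X).
  apply: mxQ_inj; rewrite mxQZ !mxQM mxQ_qX0r -Xr_intE defM' qE -scalemxAl.
  by rewrite mulmxKV // Xr_unit.
exact: modq_qscale.
Qed.

Lemma det_conj_neq0 : \det N != 0 -> \det N' != 0.
Proof.
by rewrite -!mxQ_unit defN' !unitmx_mul Xr_unit X0r_unit andbT => ->.
Qed.

Lemma gauss_term_mulXr U :
  \det N != 0 -> gauss_term M' N' (U *m X) = gauss_term M N U.
Proof.
move=> detN; have unitN : mxQ N \in unitmx by rewrite mxQ_unit.
have unitXr := Xr_unit; rewrite /gauss_term.
set Xv := invmx (Xr n q r); set Ni := invmx (mxQ N).
have defQ : invmx (mxQ N') *m mxQ M' = Xv *m Ni *m mxQ M *m Xv.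
  apply: (canLR (mulKmx _)); first by rewrite mxQ_unit det_conj_neq0.
  by rewrite defN' defM' !mulmxA mulmxK // mulmxK.
have XrT : (Xr n q r)^T = Xr n q r by rewrite Xr_intE -mxQT tr_diag_mx.
rewrite -mulmxA defQ mxQM -Xr_intE trmx_mul XrT !mulmxA mulmxK //.
by rewrite -!mulmxA mxtrace_mulC !mulmxA mulmxKV.
Qed.

Hypotheses (le_rn : (r <= n)%N) (pairMN : coprime_symmetric_pair M N).

Lemma mulXr_congr U V : row_congr N' (U *m X) (V *m X) <-> row_congr N U V.
Proof.
split; last exact: row_congr_mulmx N_mul_Xr.
apply: (row_congr_mulmx_reflect q_prime (row_free_modq q_prime pairMN)
  modq_qX0r_mul_M qX0r_mul_N).
by rewrite zdiag_swapM mulr1.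
Qed.

Lemma mulXr_surj V : exists U, row_congr N' (U *m X) V.
Proof.
have [W /(mulmx_Xr_int_of_modq q_prime)[U defU]] :=
  exists_modq_sub_mulmx_eq0 V (row_free_modq q_prime pairMN) modq_qX0r_mul_M
    qX0r_mul_N (modq_qXr_inv n r q_prime) (rank_modq_qX0r q_prime le_rn).
exists U; rewrite -defU; exists (- W).
by rewrite addrAC subrr add0r mulNmx.
Qed.

End ConjugatedPair.

Theorem proposition5p2 (n q r : nat) (M N M' N' : 'M[int]_n) :
  prime q -> (r <= n)%N ->
  coprime_symmetric_pair M N ->
  coprime_symmetric_pair M' N' ->
  mxQ M' = X0r n q r *m mxQ M *m invmx (Xr n q r) ->
  mxQ N' = X0r n q r *m mxQ N *m Xr n q r ->
  \det N != 0 ->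
  gauss_sum M' N' = gauss_sum M N.
Proof.
move=> q_prime le_rn pairMN [symMN' _] defM' defN' detN.
have [symMN _] := pairMN.
have detN' := det_conj_neq0 q_prime defN' detN.
rewrite !gauss_sumE.
apply: (class_sum_transfer (phi := mulmxr (Xr_int n q r)) detN detN').
- exact: gauss_term_congr detN symMN.
- exact: gauss_term_congr detN' symMN'.
- by move=> U; apply: (gauss_term_mulXr q_prime defM' defN').
- by move=> U V; apply: (mulXr_congr q_prime defM' defN').
- exact: (mulXr_surj q_prime defM' defN' le_rn pairMN).
Qed.
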